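(* Let $F:\{0,1,2\}^{\mathbb{N}}\to\{0,1,2\}^{\mathbb{N}}$ be defined by $F(c)_i=\rho_{c_{i+1}}(c_i)$, where $\rho_0=\rho_2$ is the permutation $0\mapsto0,1\mapsto2,2\mapsto1$ and $\rho_1$ is $0\mapsto1,1\mapsto2,2\mapsto0$. Then $F$ is bijective and its inverse is the CA $F^{-1}(c)_i=\pi_{c_{i+1}}(c_i)$, where $\pi_0=\pi_1$ is $0\mapsto0,1\mapsto2,2\mapsto1$ and $\pi_2$ is $0\mapsto2,2\mapsto1,1\mapsto0$. Moreover $h(F)=\tfrac12$. Consequently, for every $m\ge1$ the $m$-fold Cartesian product $F_m$ of $F$ (acting coordinatewise on $(\{0,1,2\}^m)^{\mathbb{N}}$) is a bijective CA with neighborhood $\{0,1\}$ whose inverse also has neighborhood $\{0,1\}$, and $h(F_m)=m/2$.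
   Context: $h$ denotes the topological entropy of the dynamical system $(\{0,1,2\}^{\mathbb{N}},F)$, computed with $\log_2$. A CA is a continuous shift-commuting map on a full shift. *)

From Stdlib Require Import Reals ClassicalEpsilon.
From mathcomp Require Import all_boot.
Set Implicit Arguments. Unset Strict Implicit. Unset Printing Implicit Defensive.

Definition config (A : Type) := nat -> A.

Definition ca2 (A : Type) (f : A -> A -> A) : config A -> config A :=
  fun c i => f (c i) (c i.+1).

Definition i3 (n : nat) : 'I_3 := inord n.
Definition perm3 (a b c : nat) (x : 'I_3) : 'I_3 := i3 (nth 0 [:: a; b; c] x).

Definition rho (s : 'I_3) : 'I_3 -> 'I_3 :=
  if val s == 1 then perm3 1 2 0 else perm3 0 2 1.
Definition pi3 (s : 'I_3) : 'I_3 -> 'I_3 :=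
  if val s == 2 then perm3 2 0 1 else perm3 0 2 1.

Definition Floc (x y : 'I_3) : 'I_3 := rho y x.
Definition F : config 'I_3 -> config 'I_3 := ca2 Floc.
Definition Gloc (x y : 'I_3) : 'I_3 := pi3 y x.
Definition G : config 'I_3 -> config 'I_3 := ca2 Gloc.

Definition Fmloc (m : nat) (x y : {ffun 'I_m -> 'I_3}) : {ffun 'I_m -> 'I_3} :=
  [ffun j => Floc (x j) (y j)].
Definition Fm (m : nat) : config {ffun 'I_m -> 'I_3} -> config {ffun 'I_m -> 'I_3} :=
  ca2 (@Fmloc m).

Definition pbool (P : Prop) : bool :=
  if excluded_middle_informative P then true else false.

Definition window (A : finType) (T : config A -> config A) (k n : nat) (c : config A)
  : {ffun 'I_n * 'I_k -> A} := [ffun ti : 'I_n * 'I_k => iter (nat_of_ord ti.1) T c (nat_of_ord ti.2)].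

(* N(k,n) = number of atoms of the join of T^{-t} P_k, t < n, where P_k is the
   clopen partition of A^N into cylinders of length k *)
Definition nwindows (A : finType) (T : config A -> config A) (k n : nat) : nat :=
  #|[set p : {ffun 'I_n * 'I_k -> A} | pbool (exists c, window T k n c = p)]|.

Definition log2 (x : R) : R := Rdiv (ln x) (ln 2).

(* h(T) = sup_k lim_n (1/n) log2 N(k,n)  (the cylinder partitions P_k are cofinal
   among open covers of the compact space A^N, so this is the topological entropy) *)
Definition has_entropy (A : finType) (T : config A -> config A) (h : R) : Prop :=
  exists hk : nat -> R,
    (forall k, Un_cv (fun n => Rdiv (log2 (INR (nwindows T k n.+1))) (INR n.+1)) (hk k))
    /\ is_lub (fun x => exists k, x = hk k) h.
Arguments Fm m : clear implicits.

From Stdlib Require Import Reals Lra FunctionalExtensionality ClassicalEpsilon.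
From mathcomp Require Import all_boot zify.
Set Implicit Arguments. Unset Strict Implicit. Unset Printing Implicit Defensive.

(* Idea: in the time series of a single cell under F (a column of the
   space-time diagram), 1 is always followed by 2, while 0 and 2 are followed
   by 0 or 1, and the transitions 2 -> 0 and 0 -> 1 happen exactly when the
   right neighbour shows 1.  Induction on time then shows that all the 1s of a
   column occur at times of one parity, so a column of height n carries about
   n/2 bits, and a k x n window, determined by its top row and last column,
   takes at most 3^k 2^(n/2 + 2) values.  Conversely every bit sequence can be
   written into a column as pulses 1 2, so there are at least 2^(n/2) windows.
   Hence log2 N(k, n) = n/2 + O(k) and h(F) = 1/2; windows of F_m are m-tuples
   of windows of F, whence h(F_m) = m/2. *)

Section OneSidedCA.
Variables (A : Type) (f : A -> A -> A).
Local Notation T := (ca2 f).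

Definition shift (i : nat) (c : config A) : config A := fun j => c (j + i).

Definition column (c : config A) (t : nat) : A := iter t T c 0.

Lemma ca2_cancel (g : A -> A -> A) :
  (forall a b c, g (f a b) (f b c) = a) -> cancel T (ca2 g).
Proof. by move=> fK c; apply: functional_extensionality => i; apply: fK. Qed.

Lemma iter_ca2_shift t i c : iter t T (shift i c) = shift i (iter t T c).
Proof.
elim: t => //= t ->; apply: functional_extensionality => j.
by rewrite /shift /ca2 addSn.
Qed.

Lemma iter_ca2E t c i : iter t T c i = column (shift i c) t.
Proof. by rewrite /column iter_ca2_shift /shift add0n. Qed.

Lemma columnS c t : column c t.+1 = f (column c t) (column (shift 1 c) t).
Proof. by rewrite -iter_ca2E. Qed.

Lemma column_extend (w v : nat -> A) n :
  (forall t, f (w t) (v t) = w t.+1) ->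
  (exists c, forall t, t < n -> column c t = v t) ->
  exists c, forall t, t < n.+1 -> column c t = w t.
Proof.
move=> wS [c cv]; exists (fun i => if i is i.+1 then c i else w 0).
have shift_c : shift 1 (fun i => if i is i.+1 then c i else w 0) = c.
  by apply: functional_extensionality => j; rewrite /shift addn1.
elim=> // t IH tn.
by rewrite columnS shift_c IH ?cv ?wS // ltnW.
Qed.

End OneSidedCA.

Lemma window_eq_of_row_column (A : finType) (f : A -> A -> A) k n c d :
  (forall i, i <= k -> c i = d i) ->
  (forall t, t < n -> iter t (ca2 f) c k = iter t (ca2 f) d k) ->
  window (ca2 f) k.+1 n c = window (ca2 f) k.+1 n d.
Proof.
move=> row col.
suff eq_cd t i : t < n -> i <= k -> iter t (ca2 f) c i = iter t (ca2 f) d i.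
  by apply/ffunP => -[t i]; rewrite !ffunE eq_cd // -ltnS.
elim: t i => [|t IH] i tn; first exact: row.
rewrite leq_eqVlt => /predU1P[-> | ik]; first exact: col.
by rewrite /= /ca2 !IH // ltnW.
Qed.

Lemma pboolP (P : Prop) : reflect P (pbool P).
Proof. by rewrite /pbool; case: excluded_middle_informative => H; constructor. Qed.

Section Windows.
Variables (A : finType) (T : config A -> config A).

Definition windows k n := [set p | pbool (exists c, window T k n c = p)].

Lemma nwindowsE k n : nwindows T k n = #|windows k n|.
Proof. by []. Qed.

Lemma windowsP k n p : reflect (exists c, window T k n c = p) (p \in windows k n).
Proof. by rewrite inE; apply: pboolP. Qed.

Lemma mem_windows k n c : window T k n c \in windows k n.
Proof. by apply/windowsP; exists c. Qed.

Lemma nwindows0 (a : A) n : nwindows T 0 n = 1.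
Proof.
apply/eqP; rewrite eqn_leq nwindowsE; apply/andP; split.
  by rewrite (leq_trans (max_card _)) // card_ffun card_prod !card_ord muln0.
by apply/card_gt0P; exists (window T 0 n (fun=> a)); apply: mem_windows.
Qed.

Lemma nwindows_le_card (a : A) k n (C : finType) (code : config A -> C) :
  (forall c d, code c = code d -> window T k n c = window T k n d) ->
  nwindows T k n <= #|C|.
Proof.
move=> code_window.
have [r rP] : exists r : {ffun 'I_n * 'I_k -> A} -> config A,
    forall p, p \in windows k n -> window T k n (r p) = p.
  apply: (@fin_all_exists _ (fun=> config A)
            (fun p c => p \in windows k n -> window T k n c = p)) => p.
  by case: (windowsP p) => [[c <-]|_]; [exists c | exists (fun=> a)].
apply: (leq_card_in (code \o r)) => p q pW qW /code_window.
by rewrite !rP.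
Qed.

Lemma card_le_nwindows k n (C : finType) (obs : {ffun 'I_n * 'I_k -> A} -> C) :
  (forall x, exists c, obs (window T k n c) = x) -> #|C| <= nwindows T k n.
Proof.
move=> obs_onto; rewrite nwindowsE (leq_trans _ (leq_imset_card obs _)) //.
apply/subset_leq_card/subsetP => x _; have [c <-] := obs_onto x.
exact: imset_f (mem_windows k n c).
Qed.

End Windows.

Definition prod_rule (A : Type) (m : nat) (f : A -> A -> A)
    (x y : {ffun 'I_m -> A}) : {ffun 'I_m -> A} :=
  [ffun j => f (x j) (y j)].
Arguments prod_rule {A} m f.

Lemma prod_rule_cancel (A : Type) m (f g : A -> A -> A) :
  (forall a b c, g (f a b) (f b c) = a) ->
  forall x y z, prod_rule m g (prod_rule m f x y) (prod_rule m f y z) = x.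
Proof. by move=> fK x y z; apply/ffunP => j; rewrite !ffunE fK. Qed.

Section Product.
Variables (A : finType) (m : nat) (f : A -> A -> A).

Definition component (j : 'I_m) (C : config {ffun 'I_m -> A}) : config A :=
  fun i => C i j.

Lemma iter_prod_rule t C i j :
  iter t (ca2 (prod_rule m f)) C i j = iter t (ca2 f) (component j C) i.
Proof. by elim: t i => // t IH i; rewrite /= /ca2 ffunE !IH. Qed.

Lemma nwindows_prod k n : nwindows (ca2 (prod_rule m f)) k n = nwindows (ca2 f) k n ^ m.
Proof.
pose tr (w : {ffun 'I_m -> {ffun 'I_n * 'I_k -> A}}) : {ffun 'I_n * 'I_k -> {ffun 'I_m -> A}} :=
  [ffun ti => [ffun j => w j ti]].
have tr_inj : injective tr.
  move=> w w' /ffunP eq_w; apply/ffunP => j; apply/ffunP => ti.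
  by have /ffunP/(_ j) := eq_w ti; rewrite !ffunE.
have window_prod C : window (ca2 (prod_rule m f)) k n C =
    tr [ffun j => window (ca2 f) k n (component j C)].
  by apply/ffunP => ti; apply/ffunP => j; rewrite !ffunE iter_prod_rule.
rewrite !nwindowsE -[m in RHS]card_ord -card_ffun_on -(card_imset _ tr_inj).
apply: eq_card => w; apply/windowsP/imsetP => [[C <-] | [v vW ->]].
  exists [ffun j => window (ca2 f) k n (component j C)] => //.
  by apply/ffun_onP => j; rewrite ffunE mem_windows.
have /fin_all_exists[c cP] : forall j, exists c, window (ca2 f) k n c = v j.
  by move=> j; apply/windowsP; apply: (ffun_onP vW).
exists (fun i => [ffun j => c j i]); rewrite window_prod; congr tr.
apply/ffunP => j; rewrite ffunE -cP; congr window.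
by apply: functional_extensionality => i; rewrite /component ffunE.
Qed.

End Product.

Definition o0 : 'I_3 := @Ordinal 3 0 isT.
Definition o1 : 'I_3 := @Ordinal 3 1 isT.
Definition o2 : 'I_3 := @Ordinal 3 2 isT.

Lemma I3_cases (x : 'I_3) : [\/ x = o0, x = o1 | x = o2].
Proof.
by case: x => -[|[|[|//]]] ?; [constructor 1 | constructor 2 | constructor 3];
  apply: val_inj.
Qed.

Lemma Floc0 y : Floc o0 y = if y == o1 then o1 else o0.
Proof.
rewrite /Floc /rho -[val y == 1]/(y == o1).
by case: ifP => _; apply: val_inj; rewrite /= inordK.
Qed.

Lemma Floc1 y : Floc o1 y = o2.
Proof.
rewrite /Floc /rho -[val y == 1]/(y == o1).
by case: ifP => _; apply: val_inj; rewrite /= inordK.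
Qed.

Lemma Floc2 y : Floc o2 y = if y == o1 then o0 else o1.
Proof.
rewrite /Floc /rho -[val y == 1]/(y == o1).
by case: ifP => _; apply: val_inj; rewrite /= inordK.
Qed.

Lemma Gloc0 y : Gloc o0 y = if y == o2 then o2 else o0.
Proof.
rewrite /Gloc /pi3 -[val y == 2]/(y == o2).
by case: ifP => _; apply: val_inj; rewrite /= inordK.
Qed.

Lemma Gloc1 y : Gloc o1 y = if y == o2 then o0 else o2.
Proof.
rewrite /Gloc /pi3 -[val y == 2]/(y == o2).
by case: ifP => _; apply: val_inj; rewrite /= inordK.
Qed.

Lemma Gloc2 y : Gloc o2 y = o1.
Proof.
rewrite /Gloc /pi3 -[val y == 2]/(y == o2).
by case: ifP => _; apply: val_inj; rewrite /= inordK.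
Qed.

Definition FlocE := (Floc0, Floc1, Floc2).
Definition GlocE := (Gloc0, Gloc1, Gloc2).

Lemma Gloc_Floc a b c : Gloc (Floc a b) (Floc b c) = a.
Proof.
by case: (I3_cases a) => ->; case: (I3_cases b) => ->; case: (I3_cases c) => ->;
  rewrite !FlocE /= GlocE.
Qed.

Lemma Floc_Gloc a b c : Floc (Gloc a b) (Gloc b c) = a.
Proof.
by case: (I3_cases a) => ->; case: (I3_cases b) => ->; case: (I3_cases c) => ->;
  rewrite !GlocE /= FlocE.
Qed.

Lemma eq_I3_of_ones a b : a != o2 -> b != o2 -> (a == o1) = (b == o1) -> a = b.
Proof. by case: (I3_cases a) => ->; case: (I3_cases b) => ->. Qed.

Local Notation col := (column Floc).

Lemma col_eq2S c t : (col c t.+1 == o2) = (col c t == o1).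
Proof.
by rewrite columnS; case: (I3_cases (col c t)) => ->; rewrite FlocE //; case: ifP.
Qed.

Lemma col_01_neighbor c t :
  col c t = o0 -> col c t.+1 = o1 -> col (shift 1 c) t = o1.
Proof. by rewrite columnS => ->; rewrite Floc0; case: eqP. Qed.

Lemma col_to0_neighbor c t : col c t != o0 -> col c t.+1 = o0 ->
  col c t = o2 /\ col (shift 1 c) t = o1.
Proof.
rewrite columnS; case: (I3_cases (col c t)) => -> // _; rewrite FlocE //.
by case: eqP.
Qed.

Lemma col_2_after_1 c r u : r <= u -> col c r = o1 -> col c u = o2 ->
  exists2 u', u = u'.+1 & r <= u' /\ col c u' = o1.
Proof.
case: u => [|u]; first by rewrite leqn0 => /eqP-> ->.
rewrite leq_eqVlt => /predU1P[-> -> //|ru _ /eqP]; rewrite col_eq2S => /eqP cu.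
by exists u.
Qed.

Lemma exists_drop (P : pred nat) r s : r <= s -> P r -> ~~ P s ->
  exists2 q, r <= q < s & P q && ~~ P q.+1.
Proof.
elim: s => [|s IH] rs Pr nPs.
  by move: rs Pr nPs; rewrite leqn0 => /eqP-> ->.
have {}rs : r <= s by move: rs Pr nPs; rewrite leq_eqVlt => /predU1P[-> -> //|].
case Ps: (P s); first by exists s; rewrite ?rs ?ltnSn ?Ps.
have [q /andP[rq qs] PqS] := IH rs Pr (negbT Ps).
by exists q; rewrite // rq ltnS (ltnW qs).
Qed.

Lemma col_ones_same_parity c r s :
  r <= s -> col c r = o1 -> col c s = o1 -> odd r = odd s.
Proof.
elim/ltn_ind: s c r => s IH c r; rewrite leq_eqVlt => /predU1P[-> //|].
case: s IH => // s IH; rewrite ltnS => rs cr cs.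
have [cs0|cs2] : col c s = o0 \/ col c s = o2.
  case: (I3_cases (col c s)) => cs'; [by left | | by right].
  by have := col_eq2S c s; rewrite cs cs'.
- (* The zeros after [q] and before [s] are entered and left at 1s of the
     right neighbour, which have a common parity by induction. *)
  have cr0 : col c r != o0 by rewrite cr.
  have cs0' : ~~ (col c s != o0) by rewrite cs0.
  have [q /andP[rq qs] /andP[cq /negPn/eqP cq0]] :=
    @exists_drop (fun u => col c u != o0) r s rs cr0 cs0'.
  have [cq2 dq] := col_to0_neighbor cq cq0.
  have [q' eq_q [rq' cq']] := col_2_after_1 rq cr cq2.
  have q's : q' < s.+1 by lia.
  rewrite (IH q' q's c r rq' cr cq').
  have := IH s (ltnSn s) (shift 1 c) q (ltnW qs) dq (col_01_neighbor cs0 cs).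
  by rewrite eq_q /= => <-; rewrite negbK.
- have [s' eq_s [rs' cs']] := col_2_after_1 rs cr cs2.
  by rewrite eq_s /= negbK (IH s' _ c r rs' cr cs') //; lia.
Qed.

Definition ones_parity (c : config 'I_3) : bool :=
  pbool (exists t, col c t = o1 /\ odd t).

Lemma odd_col_one c t : col c t = o1 -> odd t = ones_parity c.
Proof.
move=> ct; rewrite /ones_parity; case: pboolP => [[u [cu <-]] | no_odd].
  case: (leqP t u) => [tu | /ltnW ut]; first exact: col_ones_same_parity tu ct cu.
  exact/esym/(col_ones_same_parity ut cu ct).
by apply/negP => odd_t; apply: no_odd; exists t.
Qed.

Lemma col_eq_of_ones c d n : col c 0 = col d 0 ->
  (forall t, t < n -> (col c t == o1) = (col d t == o1)) ->
  forall t, t < n -> col c t = col d t.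
Proof.
move=> cd0 ones; elim=> // t IH tn; have ctd := IH (ltnW tn).
case: (boolP (col c t == o1)) => ct.
  have /eqP-> : col c t.+1 == o2 by rewrite col_eq2S.
  by have /eqP-> : col d t.+1 == o2 by rewrite col_eq2S -ctd.
by apply: eq_I3_of_ones; rewrite ?col_eq2S -?ctd // ones.
Qed.

(* The top row and the last column determine a window; the last column is in
   turn determined by its first symbol, the parity of its times showing 1, and
   which of the times of that parity show 1. *)
Definition window_code k n (c : config 'I_3) :=
  let b := ones_parity (shift k c) in
  ([ffun i : 'I_k.+1 => c i], b,
   [ffun j : 'I_n./2.+1 => col (shift k c) (j.*2 + b) == o1]).

Lemma window_code_inj k n c d : window_code k n c = window_code k n d ->
  window F k.+1 n c = window F k.+1 n d.
Proof.
case=> /ffunP row par /ffunP ones.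
apply: window_eq_of_row_column => [i ik | t tn].
  by have := row (Ordinal (ik : i < k.+1)); rewrite !ffunE.
rewrite !iter_ca2E; apply: (@col_eq_of_ones _ _ n) => // [|u un].
  by have := row ord_max; rewrite !ffunE /column /shift /= add0n.
have [par_u | npar_u] := boolP (odd u == ones_parity (shift k c)).
  have uj : u./2 < n./2.+1 by rewrite ltnS half_leq // ltnW.
  have := ones (Ordinal uj); rewrite !ffunE /= -par -(eqP par_u).
  by rewrite addnC odd_double_half.
have no_one e : ones_parity (shift k e) = ones_parity (shift k c) ->
    (col (shift k e) u == o1) = false.
  move=> epar; apply/negbTE/eqP => /odd_col_one odd_u.
  by rewrite odd_u epar eqxx in npar_u.
by rewrite !no_one.
Qed.

Lemma nwindowsF_le k n : nwindows F k.+1 n <= 3 ^ k.+1 * 2 ^ (n./2 + 2).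
Proof.
rewrite (leq_trans (nwindows_le_card o0 (@window_code_inj k n))) //.
by rewrite !card_prod !card_ffun !card_ord card_bool -mulnA -expnS addn2.
Qed.

Definition pulses (b : nat -> bool) (t : nat) : 'I_3 :=
  if b t./2 then (if odd t then o2 else o1) else o0.

Definition delayed_pulses (b : nat -> bool) (t : nat) : 'I_3 :=
  if t is t.+1 then pulses b t else o0.

Definition xor_next (b : nat -> bool) (j : nat) : bool := b j (+) b j.+1.

Definition delay (b : nat -> bool) (j : nat) : bool :=
  if j is j.+1 then b j else false.

Lemma pulses_double b j : pulses b j.*2 = if b j then o1 else o0.
Proof. by rewrite /pulses odd_double doubleK. Qed.

Lemma pulses_doubleS b j : pulses b j.*2.+1 = if b j then o2 else o0.
Proof. by rewrite /pulses /= odd_double uphalf_double. Qed.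

Lemma even_or_odd t : exists j, t = j.*2 \/ t = j.*2.+1.
Proof.
exists t./2; move: (odd_double_half t); set j := t./2.
by case: (odd t) => <-; [right | left].
Qed.

Lemma pulses_step b t :
  Floc (pulses b t) (delayed_pulses (xor_next b) t) = pulses b t.+1.
Proof.
have [j [->|->]] := even_or_odd t.
  rewrite pulses_double pulses_doubleS; case: j => [|j].
    by case: (b 0); rewrite FlocE.
  rewrite doubleS /= pulses_doubleS.
  by case: (b j.+1); case: (xor_next b j); rewrite FlocE.
rewrite pulses_doubleS /= pulses_double -doubleS pulses_double /xor_next.
by case: (b j); case: (b j.+1); rewrite FlocE.
Qed.

Lemma delayed_pulses_step b t :
  Floc (delayed_pulses b t) (pulses (xor_next (delay b)) t) = delayed_pulses b t.+1.
Proof.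
have [j [->|->]] := even_or_odd t.
  case: j => [|j] /=.
    by rewrite -[0]/(0.*2) !pulses_double /xor_next /=; case: (b 0); rewrite FlocE.
  rewrite doubleS /= !pulses_doubleS -doubleS !pulses_double /xor_next /=.
  by case: (b j); case: (b j.+1); rewrite FlocE.
rewrite /= pulses_double !pulses_doubleS.
by case: (b j); case: (xor_next (delay b) j); rewrite FlocE.
Qed.

Lemma pulses_realizable n b :
  (exists c, forall t, t < n -> col c t = pulses b t) /\
  (exists c, forall t, t < n -> col c t = delayed_pulses b t).
Proof.
elim: n b => [|n IH] b; first by split; exists (fun=> o0).
split; apply: column_extend.
- exact: pulses_step.
- exact: (IH _).2.
- exact: delayed_pulses_step.
- exact: (IH _).1.
Qed.

Lemma nwindowsF_ge k n : 2 ^ n.+1./2 <= nwindows F k.+1 n.+1.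
Proof.
pose obs (p : {ffun 'I_n.+1 * 'I_k.+1 -> 'I_3}) :=
  [ffun j : 'I_n.+1./2 => p (inord j.*2, ord0) == o1].
suff /card_le_nwindows : forall x, exists c, obs (window F k.+1 n.+1 c) = x.
  by rewrite card_ffun card_bool card_ord.
move=> x; pose b j := if insub j is Some i then x i else false.
have [c cb] := (pulses_realizable n.+1 b).1.
exists c; apply/ffunP => j; have j2n : j.*2 < n.+1 by rewrite ltnW // -gtn_half_double.
rewrite !ffunE inordK // [iter _ _ _ _]cb // pulses_double /b valK.
by case: (x j).
Qed.

Local Open Scope R_scope.

Lemma INR_expn a b : INR (a ^ b)%N = INR a ^ b.
Proof. by elim: b => // b IH; rewrite expnS -multE mult_INR IH. Qed.

Lemma ln2_gt0 : 0 < ln 2.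
Proof. by rewrite -ln_1; apply: ln_increasing; lra. Qed.

Lemma log2_le x y : 0 < x -> x <= y -> log2 x <= log2 y.
Proof.
move=> x0 [xy|<-]; last exact: Rle_refl.
apply/Rmult_le_compat_r/Rlt_le/ln_increasing => //.
exact/Rlt_le/Rinv_0_lt_compat/ln2_gt0.
Qed.

Lemma log2_mul x y : 0 < x -> 0 < y -> log2 (x * y) = log2 x + log2 y.
Proof. by move=> x0 y0; rewrite /log2 ln_mult // /Rdiv Rmult_plus_distr_r. Qed.

Lemma log2_pow x m : 0 < x -> log2 (x ^ m) = INR m * log2 x.
Proof. by move=> x0; rewrite /log2 ln_pow // /Rdiv Rmult_assoc. Qed.

Lemma log2_nat_sandwich (N a b : nat) : (2 ^ a <= N <= b * 2 ^ a)%N ->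
  INR a <= log2 (INR N) <= log2 (INR b) + INR a.
Proof.
case/andP => lo hi.
have pos2a : 0 < INR (2 ^ a) by apply/lt_0_INR/ltP; rewrite expn_gt0.
have b0 : 0 < INR b.
  apply/lt_0_INR/ltP; rewrite lt0n; apply: contraTneq hi => ->.
  by rewrite mul0n -ltnNge (leq_trans _ lo) // expn_gt0.
have log2_2a : log2 (INR (2 ^ a)) = INR a.
  rewrite INR_expn log2_pow; last by simpl; lra.
  by rewrite /log2 /Rdiv Rinv_r ?Rmult_1_r //=; apply/Rgt_not_eq/ln2_gt0.
rewrite -{1}log2_2a -log2_2a -log2_mul // -mult_INR multE.
have N_pos : 0 < INR N by apply: Rlt_le_trans pos2a (le_INR _ _ (leP lo)).
by split; apply: log2_le => //; apply/le_INR/leP.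
Qed.

Lemma half_bounds n : INR n - 1 <= 2 * INR n./2 <= INR n.
Proof.
have : INR n = INR (odd n) + 2 * INR n./2.
  by rewrite -{1}(odd_double_half n) plus_INR -mul2n -multE mult_INR.
by case: (odd n) => /= ->; lra.
Qed.

Definition devF (k : nat) : R := log2 (INR (3 ^ k.+1 * 4)) + 1.

Lemma log2_nwindowsF_dev k n :
  Rabs (log2 (INR (nwindows F k.+1 n.+1)) - / 2 * INR n.+1) <= devF k.
Proof.
have /log2_nat_sandwich[lo hi] :
    (2 ^ n.+1./2 <= nwindows F k.+1 n.+1 <= 3 ^ k.+1 * 4 * 2 ^ n.+1./2)%N.
  rewrite nwindowsF_ge (leq_trans (nwindowsF_le _ _)) //.
  by rewrite expnD mulnA mulnAC.
have b_ge0 : 0 <= log2 (INR (3 ^ k.+1 * 4)).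
  rewrite -(Rmult_0_l (/ ln 2)) -ln_1; apply: log2_le; first lra.
  by apply/(le_INR 1)/leP; rewrite muln_gt0 expn_gt0.
have := half_bounds n.+1; rewrite /devF => half_n.
by apply: Rabs_le; split; lra.
Qed.

Lemma Un_cv_of_dev_bound (u : nat -> R) l C :
  (forall n, Rabs (u n - l) <= C / INR n.+1) -> Un_cv u l.
Proof.
move=> dev eps eps0; have [N N_gt] := INR_unbounded (C / eps).
exists N => n nN; apply: Rle_lt_trans (dev n) _.
have n1_pos : 0 < INR n.+1 by apply/lt_0_INR/ltP.
have Nn : INR N <= INR n.+1 by apply/le_INR; lia.
have e1 : C / eps * eps = C by field; lra.
have e2 : C / INR n.+1 * INR n.+1 = C by field; lra.
nra.
Qed.

Lemma has_entropy_of_dev (A : finType) (a : A) (T : config A -> config A) v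
    (C : nat -> R) : 0 <= v ->
  (forall k n, Rabs (log2 (INR (nwindows T k.+1 n.+1)) - v * INR n.+1) <= C k) ->
  has_entropy T v.
Proof.
move=> v0 dev; exists (fun k => if k is 0%N then 0 else v); split.
  case=> [|k].
    apply: (@Un_cv_of_dev_bound _ _ 0) => n.
    rewrite (nwindows0 _ a) /log2 /= ln_1 /Rdiv !Rmult_0_l Rminus_0_r Rabs_R0.
    exact: Rle_refl.
  apply: (@Un_cv_of_dev_bound _ _ (C k)) => n.
  have n1_pos : 0 < INR n.+1 by apply/lt_0_INR/ltP.
  have -> : log2 (INR (nwindows T k.+1 n.+1)) / INR n.+1 - v =
      (log2 (INR (nwindows T k.+1 n.+1)) - v * INR n.+1) / INR n.+1.
    by field; lra.
  have inv_pos := Rlt_le _ _ (Rinv_0_lt_compat _ n1_pos).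
  by rewrite /Rdiv Rabs_mult (Rabs_pos_eq _ inv_pos); apply: Rmult_le_compat_r.
split => [_ [[|k] ->] // | b ub]; first exact: Rle_refl.
by apply: ub; exists 1%N.
Qed.

Lemma log2_nwindowsFm_dev m k n :
  Rabs (log2 (INR (nwindows (Fm m) k.+1 n.+1)) - INR m / INR 2 * INR n.+1)
    <= INR m * devF k.
Proof.
have N_pos : 0 < INR (nwindows F k.+1 n.+1).
  by apply/lt_0_INR/ltP; apply: leq_trans (nwindowsF_ge k n); rewrite expn_gt0.
rewrite (nwindows_prod m Floc) INR_expn log2_pow //.
have -> : INR m * log2 (INR (nwindows F k.+1 n.+1)) - INR m / INR 2 * INR n.+1
    = INR m * (log2 (INR (nwindows F k.+1 n.+1)) - / 2 * INR n.+1).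
  by rewrite /=; field.
rewrite Rabs_mult Rabs_pos_eq; last exact: pos_INR.
exact/Rmult_le_compat_l/log2_nwindowsF_dev/pos_INR.
Qed.

Close Scope R_scope.

Theorem mainTheorem5 :
  [/\ bijective F, cancel F G, cancel G F, has_entropy F (Rdiv (INR 1) (INR 2)) &
      forall m : nat, 1 <= m ->
        [/\ bijective (Fm m),
            exists g : {ffun 'I_m -> 'I_3} -> {ffun 'I_m -> 'I_3} -> {ffun 'I_m -> 'I_3},
              cancel (Fm m) (ca2 g) /\ cancel (ca2 g) (Fm m)
          & has_entropy (Fm m) (Rdiv (INR m) (INR 2))]].
Proof.
have FK : cancel F G := ca2_cancel Gloc_Floc.
have GK : cancel G F := ca2_cancel Floc_Gloc.
split => //; first exact: Bijective FK GK.
  have -> : Rdiv (INR 1) (INR 2) = Rinv 2 by rewrite /=; field.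
  by apply: (has_entropy_of_dev o0 (C := devF)); [lra | exact: log2_nwindowsF_dev].
move=> m _.
have FmK : cancel (Fm m) (ca2 (prod_rule m Gloc)).
  exact/ca2_cancel/prod_rule_cancel/Gloc_Floc.
have GmK : cancel (ca2 (prod_rule m Gloc)) (Fm m).
  exact/ca2_cancel/prod_rule_cancel/Floc_Gloc.
split; [exact: Bijective FmK GmK | by exists (prod_rule m Gloc) |].
apply: (has_entropy_of_dev [ffun=> o0] (C := fun k => Rmult (INR m) (devF k))).
  by apply: Rmult_le_pos; [exact: pos_INR | rewrite /=; lra].
exact: log2_nwindowsFm_dev.
Qed.
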